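(* Let $k$ be a field of characteristic $p>0$, let $1\le c<p$, and let $a\ge b\ge1$ be integers, $d=a+b+c$. Then the Young module $Y^{(a,b,1^c)}$ is a direct summand of the signed permutation module $M^{(a,b|c)}$.
   Context: For a sequence $\gamma=(\gamma_1,\dots,\gamma_t)$ of nonnegative integers summing to $r$, $\Sigma_\gamma=\Sigma_{\gamma_1}\times\dots\times\Sigma_{\gamma_t}\le\Sigma_r$ (the first factor permuting the first $\gamma_1$ letters, etc.). For $\lambda=(\lambda_1,\dots,\lambda_m)$, $\mu=(\mu_1,\dots,\mu_n)$ with $|\lambda|+|\mu|=d$, the signed permutation module is $M^{(\lambda|\mu)}=\operatorname{ind}_{\Sigma_\lambda\times\Sigma_\mu}^{\Sigma_d}(k\boxtimes\operatorname{sgn})$, with $k$ trivial for $\Sigma_\lambda$ and $\operatorname{sgn}$ the sign representation of $\Sigma_\mu$; thus $M^{(a,b|c)}=\operatorname{ind}_{\Sigma_a\times\Sigma_b\times\Sigma_c}^{\Sigma_d}(k\boxtimes k\boxtimes\operatorname{sgn})$. For a partition $\lambda$ of $d$, the Young module $Y^\lambda$ is the unique indecomposable direct summand of the permutation module $M^\lambda=\operatorname{ind}_{\Sigma_\lambda}^{\Sigma_d}k$ containing the Specht module $S^\lambda$. *)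

From HB Require Import structures.
From mathcomp Require Import all_boot all_order all_algebra all_fingroup.
From mathcomp Require Import mxrepresentation.
Set Implicit Arguments. Unset Strict Implicit. Unset Printing Implicit Defensive.
Import GRing.Theory.
Local Open Scope ring_scope.

(* For a sequence gamma of nats summing to d, [rowof gamma i] is the index of the
   block (row) of gamma containing the letter i, letters being 0,...,d-1 and the
   blocks being consecutive: block j = [g_0+..+g_(j-1), g_0+..+g_j). *)
Definition rowof (gamma : seq nat) (i : nat) : nat :=
  count (fun j => \sum_(l < j.+1) nth 0 gamma l <= i)%N (iota 0 (size gamma)).

(* Column of the letter i in the tableau of shape gamma filled row by row
   with 0,...,d-1. *)
Definition colof (gamma : seq nat) (i : nat) : nat :=
  (i - \sum_(l < rowof gamma i) nth 0 gamma l)%N.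

Definition stab_lab d (f : nat -> nat) : {set {perm 'I_d}} :=
  [set s : {perm 'I_d} | [forall i : 'I_d, f (s i) == f i]].

Definition young_sub d (gamma : seq nat) := stab_lab d (rowof gamma).
Definition col_stab d (gamma : seq nat) := stab_lab d (colof gamma).

Section GroupAlgebra.
Variables (F : fieldType) (d : nat).

Definition SymG := [set: {perm 'I_d}]%G.
Definition nG := gcard SymG.
Definition aG := regular_repr F SymG.

Definition gelt (x : {perm 'I_d}) : 'rV[F]_nG := gring_row (aG x).

Definition gmul (u v : 'rV[F]_nG) : 'rV[F]_nG := u *m gring_mx aG v.

Definition symz (A : {set {perm 'I_d}}) : 'rV[F]_nG :=
  \sum_(x in A) gelt x.
Definition asymz (A : {set {perm 'I_d}}) : 'rV[F]_nG :=
  \sum_(x in A) ((-1) ^+ odd_perm x) *: gelt x.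

(* Permutation module M^gamma = ind_{Sigma_gamma}^{Sigma_d} k, realised as the
   cyclic submodule of kG generated by the Young-subgroup sum. *)
Definition perm_module (gamma : seq nat) : 'M[F]_nG :=
  cyclic_mx aG (symz (young_sub d gamma)).

(* Signed permutation module M^(lam|mu) = ind_{Sigma_lam x Sigma_mu}^{Sigma_d}
   (k boxtimes sgn), realised as the cyclic submodule of kG generated by
   sum_{(x,y) in Sigma_lam x Sigma_mu} sgn(y) x y, where Sigma_lam acts on the
   first |lam| letters and Sigma_mu on the last |mu| letters. *)
Definition signed_perm_module (lam mu : seq nat) : 'M[F]_nG :=
  cyclic_mx aG
    (gmul (symz (young_sub d (lam ++ nseq (sumn mu) 1%N)))
          (asymz (young_sub d (nseq (sumn lam) 1%N ++ mu)))).

(* Specht module S^lam inside M^lam: spanned by the polytabloids, i.e. the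
   cyclic submodule generated by e_t = (row symmetriser)(column antisymmetriser)
   for the row-reading tableau t of shape lam. *)
Definition specht_module (lam : seq nat) : 'M[F]_nG :=
  cyclic_mx aG (gmul (symz (young_sub d lam)) (asymz (col_stab d lam))).

Definition mx_indecomposable (U : 'M[F]_nG) : Prop :=
  [/\ mxmodule aG U, U != 0 &
   forall V W : 'M[F]_nG, mxmodule aG V -> mxmodule aG W ->
     (V + W :=: U)%MS -> mxdirect (V + W) -> V = 0 \/ W = 0].

(* Y is (a submodule realising) the Young module Y^lam: an indecomposable
   direct summand of M^lam containing S^lam. *)
Definition is_young_module (lam : seq nat) (Y : 'M[F]_nG) : Prop :=
  [/\ mx_indecomposable Y, inhabited (mxsplits aG (perm_module lam) Y) &
      (specht_module lam <= Y)%MS].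

End GroupAlgebra.

From Pilot Require Import Defs.
From HB Require Import structures.
From mathcomp Require Import all_boot all_order all_algebra all_fingroup.
From mathcomp Require Import mxrepresentation zify.
Set Implicit Arguments. Unset Strict Implicit. Unset Printing Implicit Defensive.
Import GRing.Theory.
Local Open Scope ring_scope.

(* Let e = c!^-1 sum_(h in S_c) sgn(h) h, where S_c permutes the last c letters;
   c! is invertible in F because c < p. Left multiplication by e commutes with the
   right regular action of S_d. As S_c commutes with S_a x S_b, it maps
   M^lam = x_lam kS_d into x_lam e kS_d = M^(a,b|c), which lies in M^lam; as S_c lies
   in the column stabiliser of the lam-tableau, it fixes the polytabloid x_lam y_lam,
   hence the Specht module S^lam <= Y. Followed by the projection of M^lam onto Y, it
   is an endomorphism of the indecomposable module Y that fixes S^lam <> 0, so it is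
   injective by Fitting's lemma. Hence eY ~ Y and eY + W = M^lam is direct for every
   complement W of Y, and the modular law makes eY a direct summand of M^(a,b|c). *)

Lemma nonincreasing_nat_plateau (f : nat -> nat) :
  (forall k, f k.+1 <= f k)%N -> exists k, f k.+1 = f k.
Proof.
move=> dec; move: {2}(f 0%N) (leqnn (f 0%N)) => m.
elim: m f dec => [|m IHm] f dec le_f0_m.
  by exists 0%N; apply/eqP; rewrite eqn_leq dec (leq_trans le_f0_m).
have [lt_f10|gt_f10|eq_f10] := ltngtP (f 1%N) (f 0%N); last by exists 0%N.
- have [k fk] := IHm (fun k => f k.+1) (fun k => dec k.+1) (leq_trans lt_f10 le_f0_m).
  by exists k.+1.
- by move: (dec 0%N); rewrite leqNgt gt_f10.
Qed.

Section MxPower.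
Variables (F : fieldType) (n : nat).

Fixpoint mxpow (g : 'M[F]_n) k := if k is k'.+1 then mxpow g k' *m g else 1%:M.

Lemma mxpowSl g k : mxpow g k.+1 = g *m mxpow g k.
Proof.
elim: k => [|k IHk]; first by rewrite /= mul1mx mulmx1.
by rewrite -[mxpow g k.+2]/(mxpow g k.+1 *m g) {1}IHk -mulmxA.
Qed.

Lemma mxpowD g i j : mxpow g (i + j) = mxpow g i *m mxpow g j.
Proof. by elim: j => [|j IHj]; rewrite ?addn0 ?mulmx1 // addnS /= IHj mulmxA. Qed.

End MxPower.

Section Fitting.
Variables (F : fieldType) (gT : finGroupType) (G : {group gT}) (n : nat).
Variables (rG : mx_representation F G n) (Y g : 'M[F]_n).
Hypotheses (modY : mxmodule rG Y) (homg : (Y <= dom_hom_mx rG g)%MS).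
Hypothesis sYgY : (Y *m g <= Y)%MS.

Lemma mxpow_stable k : (Y *m mxpow g k <= Y)%MS.
Proof.
elim: k => [|k IHk] /=; first by rewrite mulmx1.
by rewrite mulmxA (submx_trans _ sYgY) ?submxMr.
Qed.

Lemma mxpow_hom k : (Y <= dom_hom_mx rG (mxpow g k))%MS.
Proof.
elim: k => [|k IHk]; first exact: scalar_mx_hom.
apply/hom_mxP => x Gx /=.
by rewrite !mulmxA (hom_mxP IHk x Gx) (hom_mxP (submx_trans (mxpow_stable k) homg)).
Qed.

(* Once the ranks of the images Y g^k stop decreasing, g^N is bijective on its image. *)
Lemma fitting_decomposition :
  exists2 N, (0 < N)%N &
    let K := (Y :&: kermx (mxpow g N))%MS in let I := (Y *m mxpow g N)%MS in
    (K + I :=: Y)%MS /\ mxdirect (K + I).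
Proof.
have Ydec k : (Y *m mxpow g k.+1 <= Y *m mxpow g k)%MS.
  by rewrite mxpowSl mulmxA submxMr.
have [k rank_k] := nonincreasing_nat_plateau (fun k => mxrankS (Ydec k)).
have eqI j : (Y *m mxpow g (j + k) :=: Y *m mxpow g k)%MS.
  elim: j => [|j IHj] //; rewrite addSn /= mulmxA.
  apply: eqmx_trans (eqmxMr g IHj) _; rewrite -mulmxA.
  apply/eqmxP; rewrite Ydec /=.
  by have := mxrank_leqif_sup (Ydec k); rewrite rank_k => -[_ <-].
exists k.+1 => // K I.
have IgI : (I *m mxpow g k.+1 :=: I)%MS.
  rewrite /I -mulmxA -mxpowD; apply: eqmx_trans (eqmx_sym (eqI 1%N)).
  by rewrite addnS -addSn; apply: eqI.
have injI : (I :&: kermx (mxpow g k.+1))%MS = 0.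
  by apply/eqP/mxrank_injP; rewrite IgI.
have sIY : (I <= Y)%MS by apply: mxpow_stable.
split.
  apply/eqmxP; rewrite addsmx_sub capmxSl sIY /=.
  apply/row_subP => i; set v := row i Y.
  have /submxP[w vgN] : (v *m mxpow g k.+1 <= I *m mxpow g k.+1)%MS.
    by rewrite IgI submxMr ?row_sub.
  rewrite -(subrK (w *m I) v) addmx_sub_adds ?submxMl // sub_capmx.
  rewrite addmx_sub ?row_sub ?eqmx_opp ?(submx_trans _ sIY) ?submxMl //=.
  by apply/sub_kermxP; rewrite mulmxDl vgN mulNmx mulmxA subrr.
apply/mxdirect_addsP.
have /submxP[D defKI] : ((K :&: I) <= I *m mxpow g k.+1)%MS by rewrite IgI capmxSr.
have KIg0 : (K :&: I)%MS *m mxpow g k.+1 = 0.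
  by apply/sub_kermxP; apply: submx_trans (capmxSl _ _) (capmxSr _ _).
rewrite defKI mulmxA; apply/eqP; rewrite -submx0 -injI sub_capmx.
rewrite -{1}IgI submxMr ?submxMl //=; apply/sub_kermxP.
by rewrite -[_ *m g]/(mxpow g k.+1) -(mulmxA D) -defKI.
Qed.

Hypothesis indecY : forall V W : 'M_n, mxmodule rG V -> mxmodule rG W ->
  (V + W :=: Y)%MS -> mxdirect (V + W) -> V = 0 \/ W = 0.

Lemma fitting_inj (S : 'M_n) :
  (S <= Y)%MS -> S != 0 -> S *m g = S -> (Y :&: kermx g)%MS = 0.
Proof.
move=> sSY nzS Sg; have [N N_gt0 [defY dxY]] := fitting_decomposition.
have modK := kermx_hom_module (mxpow_hom N) modY.
have modI := hom_mxmodule (mxpow_hom N) modY.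
have [K0|I0] := indecY modK modI defY dxY.
  apply/eqP; rewrite -submx0 -K0 sub_capmx capmxSl /=; apply/sub_kermxP.
  by rewrite -(prednK N_gt0) mxpowSl mulmxA (sub_kermxP (capmxSr _ _)) mul0mx.
have SgN k : S *m mxpow g k = S by elim: k => [|k IHk] /=; rewrite ?mulmx1 // mulmxA IHk Sg.
by case/negP: nzS; rewrite -submx0 -I0 -(SgN N) submxMr.
Qed.

End Fitting.

Section SummandTransfer.
Variables (F : fieldType) (gT : finGroupType) (G : {group gT}) (n : nat).
Variable rG : mx_representation F G n.

Lemma cent_mx_iso (Y E : 'M[F]_n) :
  mxmodule rG Y -> centgmx rG E -> \rank (Y *m E) = \rank Y -> mx_iso rG Y (Y *m E).
Proof.
move=> modY cE rYE; have [f unitf defYf] := complete_unitmx rYE.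
apply: (MxIso unitf); last by rewrite defYf.
apply/hom_mxP => x Gx; have [u defYx] := submxP (mxmoduleP modY x Gx).
by rewrite -defYf -(hom_mxP (centgmx_hom Y cE) x Gx) defYx -!(mulmxA u) defYf.
Qed.

Lemma mxsplits_capmx (M M' Z W : 'M[F]_n) :
  mxmodule rG M' -> mxmodule rG W -> (Z + W :=: M)%MS -> mxdirect (Z + W) ->
  (Z <= M')%MS -> (M' <= M)%MS -> mxsplits rG M' Z.
Proof.
move=> modM' modW defM dxZW sZM' sM'M.
apply: (MxSplits (W := (M' :&: W)%MS)); first exact: capmx_module.
  apply/eqmxP; rewrite addsmx_sub sZM' capmxSl /=.
  by rewrite capmxC matrix_modl // sub_capmx submx_refl andbT defM.
apply/mxdirect_addsP; apply/eqP.
by rewrite -submx0 -(mxdirect_addsP dxZW) capmxS ?capmxSr.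
Qed.

Lemma cent_fix_cyclic_mx (u : 'rV[F]_n) (E : 'M[F]_n) :
  centgmx rG E -> u *m E = u -> cyclic_mx rG u *m E = cyclic_mx rG u.
Proof.
move=> cE uE; have cE1 : centgmx rG (E - 1%:M).
  by apply/centgmxP => x Gx; rewrite mulmxBl mulmxBr mul1mx mulmx1 (centgmxP cE).
have /sub_kermxP : (cyclic_mx rG u <= kermx (E - 1%:M))%MS.
  rewrite cyclic_mx_sub ?kermx_centg_module //.
  by apply/sub_kermxP; rewrite mulmxBr mulmx1 uE subrr.
by rewrite mulmxBr mulmx1 => /eqP; rewrite subr_eq0 => /eqP.
Qed.

Variables (M Y W E : 'M[F]_n).
Hypotheses (modY : mxmodule rG Y) (modW : mxmodule rG W).
Hypotheses (defM : (Y + W :=: M)%MS) (dxYW : mxdirect (Y + W)).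
Hypothesis cE : centgmx rG E.
Hypothesis indecY : forall V W : 'M_n, mxmodule rG V -> mxmodule rG W ->
  (V + W :=: Y)%MS -> mxdirect (V + W) -> V = 0 \/ W = 0.

(* E followed by the projection onto Y is an endomorphism of Y fixing S pointwise,
   hence injective by Fitting's lemma. *)
Lemma cent_image_summand (S : 'M_n) : (Y *m E <= M)%MS ->
  (S <= Y)%MS -> S != 0 -> S *m E = S ->
  [/\ \rank (Y *m E) = \rank Y, (Y *m E + W :=: M)%MS & mxdirect (Y *m E + W)].
Proof.
move=> sYEM sSY nzS SE; set P := proj_mx Y W.
have YW0 : (Y :&: W)%MS = 0 by apply/mxdirect_addsP.
have homg : (Y <= dom_hom_mx rG (E *m P))%MS.
  have sYEYW : (Y *m E <= Y + W)%MS by rewrite defM.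
  apply/hom_mxP => x Gx; rewrite !(mulmxA _ E) (hom_mxP (centgmx_hom Y cE) x Gx).
  by rewrite (hom_mxP (submx_trans sYEYW (proj_mx_hom YW0 modY modW)) x Gx).
have sYgY : (Y *m (E *m P) <= Y)%MS by rewrite mulmxA proj_mx_sub.
have Sg : S *m (E *m P) = S by rewrite mulmxA SE proj_mx_id.
have kerY0 := fitting_inj modY homg sYgY indecY sSY nzS Sg.
have rYE : \rank (Y *m E) = \rank Y.
  have rYg : \rank (Y *m (E *m P)) = \rank Y by apply/mxrank_injP; rewrite kerY0.
  by apply/eqP; rewrite eqn_leq mxrankM_maxl /= -{1}rYg mulmxA mxrankM_maxl.
have YEW0 : (Y *m E :&: W)%MS = 0.
  have /submxP[D defYEW] := capmxSl (Y *m E) W.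
  have DY0 : D *m Y = 0.
    apply/eqP; rewrite -submx0 -kerY0 sub_capmx submxMl /=; apply/sub_kermxP.
    by rewrite mulmxA -(mulmxA D) -defYEW proj_mx_0 ?capmxSr.
  by rewrite defYEW mulmxA DY0 mul0mx.
have dxYEW : mxdirect (Y *m E + W) by apply/mxdirect_addsP.
split=> //; apply/eqmxP; have sYEWM : (Y *m E + W <= M)%MS.
  by rewrite addsmx_sub sYEM -defM addsmxSr.
rewrite sYEWM /=; have := mxrank_leqif_sup sYEWM.
by rewrite mxrank_disjoint_sum // rYE -mxrank_disjoint_sum // defM => -[_ <-].
Qed.

Lemma summand_transfer (M' S : 'M_n) :
  mxmodule rG M' -> (M *m E <= M')%MS -> (M' <= M)%MS ->
  (S <= Y)%MS -> S != 0 -> S *m E = S ->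
  exists Z, [/\ mxmodule rG Z, inhabited (mxsplits rG M' Z) & mx_iso rG Y Z].
Proof.
move=> modM' sMEM' sM'M sSY nzS SE.
have sYEM' : (Y *m E <= M')%MS by rewrite (submx_trans _ sMEM') ?submxMr // -defM addsmxSl.
have [rYE defM' dxYEW] := cent_image_summand (submx_trans sYEM' sM'M) sSY nzS SE.
exists (Y *m E); split; first exact: hom_mxmodule (centgmx_hom Y cE) modY.
  by constructor; apply: mxsplits_capmx modM' modW defM' dxYEW sYEM' sM'M.
exact: cent_mx_iso.
Qed.

End SummandTransfer.

Lemma stab_labP d (f : nat -> nat) (s : {perm 'I_d}) :
  reflect (forall i, f (s i) = f i) (s \in stab_lab d f).
Proof. by rewrite inE; apply: (iffP forallP) => fs i; apply/eqP/fs. Qed.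

Lemma stab_lab_group_set d (f : nat -> nat) : group_set (stab_lab d f).
Proof.
apply/group_setP; split=> [|s t]; rewrite !inE; first by apply/forallP => i; rewrite perm1.
by move=> /forallP sf /forallP tf; apply/forallP => i; rewrite permM (eqP (tf _)).
Qed.
Canonical stab_lab_group d f := Group (stab_lab_group_set d f).

Section GroupAlgebra.
Variables (F : fieldType) (d : nat).
Local Notation n := (nG d).
Local Notation aG := (aG F d).
Local Notation gelt := (@gelt F d).
Local Notation gmul := (@gmul F d).
Local Notation symz := (@symz F d).
Local Notation asymz := (@asymz F d).

Lemma in_SymG (x : {perm 'I_d}) : x \in SymG d.
Proof. by rewrite inE. Qed.

Lemma gmul_gelt (u : 'rV[F]_n) x : gmul u (gelt x) = u *m aG x.
Proof. by rewrite /gmul -(gring_opG aG (in_SymG x)) gring_opE. Qed.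

Lemma gmul_gelt2 x y : gmul (gelt x) (gelt y) = gelt (x * y)%g.
Proof. by rewrite gmul_gelt /gelt /Defs.gelt -gring_row_mul repr_mxM ?in_SymG. Qed.

Lemma gmulA (u v w : 'rV[F]_n) : gmul (gmul u v) w = gmul u (gmul v w).
Proof. by rewrite /gmul gring_mxA mulmxA. Qed.

Lemma gmulZl a (u v : 'rV[F]_n) : gmul (a *: u) v = a *: gmul u v.
Proof. by rewrite /gmul scalemxAl. Qed.

Lemma gmulZr a (u v : 'rV[F]_n) : gmul u (a *: v) = a *: gmul u v.
Proof. by rewrite /gmul linearZ /= scalemxAr. Qed.

Lemma gmul_suml I r (P : pred I) (f : I -> 'rV[F]_n) v :
  gmul (\sum_(i <- r | P i) f i) v = \sum_(i <- r | P i) gmul (f i) v.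
Proof. by rewrite /gmul mulmx_suml. Qed.

Lemma gmul_sumr I r (P : pred I) (f : I -> 'rV[F]_n) u :
  gmul u (\sum_(i <- r | P i) f i) = \sum_(i <- r | P i) gmul u (f i).
Proof. by rewrite /gmul linear_sum /= mulmx_sumr. Qed.

Lemma gmul_cyclic (u v : 'rV[F]_n) : (gmul u v <= cyclic_mx aG u)%MS.
Proof. by apply/cyclic_mxP; exists (gring_mx aG v); rewrite ?gring_mxP. Qed.

Definition lmul_mx (e : 'rV[F]_n) : 'M[F]_n := \matrix_(i < n) gmul e (delta_mx 0 i).

Lemma lmul_mxE (u e : 'rV[F]_n) : u *m lmul_mx e = gmul e u.
Proof.
rewrite mulmx_sum_row {2}[u]row_sum_delta gmul_sumr.
by apply: eq_bigr => i _; rewrite rowK gmulZr.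
Qed.

Lemma lmul_mx_cent e : centgmx aG (lmul_mx e).
Proof.
apply/centgmxP => x _; apply/row_matrixP => i.
by rewrite !row_mul rowK lmul_mxE rowE -!gmul_gelt gmulA.
Qed.

Lemma symz_asymzC (R H : {set {perm 'I_d}}) :
  (forall r h, r \in R -> h \in H -> commute r h) ->
  gmul (symz R) (asymz H) = gmul (asymz H) (symz R).
Proof.
move=> cRH; rewrite /symz /asymz !gmul_suml.
under eq_bigr => r _ do rewrite gmul_sumr.
under [RHS]eq_bigr => h _ do rewrite gmul_sumr.
rewrite exchange_big /=; apply: eq_bigr => h Hh; apply: eq_bigr => r Rr.
by rewrite gmulZl gmulZr !gmul_gelt2 cRH.
Qed.

Lemma asymz_mul_sub (H : {set {perm 'I_d}}) (C : {group {perm 'I_d}}) :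
  H \subset C -> gmul (asymz H) (asymz C) = #|H|%:R *: asymz C.
Proof.
move=> sHC; rewrite /asymz gmul_suml scaler_nat -sumr_const.
apply: eq_bigr => h Hh; have Ch := subsetP sHC h Hh.
rewrite gmulZl gmul_sumr [RHS](reindex_inj (mulgI h)) /=.
rewrite [RHS](eq_bigl (mem C)) => [|x]; last by rewrite /= groupMl.
rewrite scaler_sumr; apply: eq_bigr => x Cx.
by rewrite gmulZr gmul_gelt2 scalerA odd_permM signr_addb.
Qed.

Lemma gelt_coef1 x : gelt x 0 (gring_index (SymG d) 1%g) = (x == 1%g)%:R.
Proof.
rewrite /gelt /Defs.gelt /gring_row rowK gring_indexK ?group1 // mul1g mxE eqxx /=.
by congr (_ %:R); rewrite eq_sym (can_in_eq (@gring_indexK _ (SymG d))) ?in_SymG.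
Qed.

(* The coefficient of the identity in x_R y_C is 1. *)
Lemma symz_asymz_neq0 (R C : {group {perm 'I_d}}) :
  (R :&: C \subset [1])%g -> gmul (symz R) (asymz C) != 0.
Proof.
move=> tiRC; set i1 := gring_index (SymG d) 1%g.
suff: gmul (symz R) (asymz C) 0 i1 = 1.
  by apply: contra_eqN => /eqP->; rewrite mxE eq_sym oner_eq0.
rewrite /symz gmul_suml summxE (bigD1 1%g) //= big1 ?addr0 => [|r /andP[Rr nt_r]].
  rewrite /asymz gmul_sumr summxE (bigD1 1%g) //= big1 ?addr0 => [|x /andP[_ nt_x]].
    by rewrite gmulZr gmul_gelt2 mulg1 mxE gelt_coef1 eqxx odd_perm1 mulr1.
  by rewrite gmulZr gmul_gelt2 mul1g mxE gelt_coef1 (negbTE nt_x) mulr0.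
rewrite /asymz gmul_sumr summxE big1 // => x Cx.
rewrite gmulZr gmul_gelt2 mxE gelt_coef1; case: eqP => [rx1|]; last by rewrite mulr0.
have Cr : r \in C by rewrite -(invgK r) -(mulg1 r^-1%g) -rx1 mulKg groupV.
by have := subsetP tiRC r; rewrite !inE Rr Cr (negbTE nt_r) => /(_ isT).
Qed.

End GroupAlgebra.

Definition psum (gamma : seq nat) r := (\sum_(l < r) nth 0 gamma l)%N.

Lemma psum0 gamma : psum gamma 0 = 0%N.
Proof. by rewrite /psum big_ord0. Qed.

Lemma psum_cons x gamma r : psum (x :: gamma) r.+1 = (x + psum gamma r)%N.
Proof. by rewrite /psum big_ord_recl. Qed.

Lemma psum_mono gamma : {homo psum gamma : r s / (r <= s)%N}.
Proof.
apply: homo_leq => // [r s t|r]; first exact: leq_trans.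
by rewrite /psum big_ord_recr leq_addr.
Qed.

Lemma psum_ones n t r : (r <= n)%N -> psum (nseq n 1%N ++ t) r = r.
Proof. by elim: n r => [|n IHn] [|r] //= le_rn; rewrite ?psum0 // psum_cons IHn. Qed.

Lemma psum_ones_last n t : psum (nseq n 1%N ++ t) n.+1 = (n + nth 0 t 0)%N.
Proof.
by elim: n => [|n IHn] /=; [rewrite /psum big_ord1 | rewrite psum_cons IHn addSn].
Qed.

Lemma rowof_block gamma i r : (r < size gamma)%N ->
  (psum gamma r <= i < psum gamma r.+1)%N -> rowof gamma i = r.
Proof.
move=> lt_r_size /andP[le_ri lt_ir]; rewrite /rowof -(subnKC (ltnW lt_r_size)).
rewrite iotaD count_cat add0n (@eq_in_count _ _ predT) => [|j]; last first.
  by rewrite mem_iota add0n => /andP[_ lt_jr]; apply: leq_trans le_ri; apply: psum_mono.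
rewrite count_predT size_iota (@eq_in_count _ _ pred0) ?count_pred0 ?addn0 // => j.
rewrite mem_iota => /andP[le_rj _] /=; apply/negbTE; rewrite -ltnNge.
by apply: leq_trans lt_ir (psum_mono _ _); rewrite ltnS.
Qed.

Section YoungSubgroupsABC.
Variables a b c : nat.
Local Notation d := (a + b + c)%N.
Local Notation lam := [:: a, b & nseq c 1%N].
Local Notation gam := (nseq (a + b) 1%N ++ [:: c]).
Local Notation R := (young_sub d lam).
Local Notation H := (young_sub d gam).
Local Notation C := (col_stab d lam).

Lemma psum_lam m : (m <= c)%N -> psum lam m.+2 = (a + b + m)%N.
Proof. by move=> le_mc; rewrite !psum_cons -[nseq c 1%N]cats0 psum_ones // addnA. Qed.

Lemma rowof_lam (i : 'I_d) :
  rowof lam i = if (i < a)%N then 0%N else if (i < a + b)%N then 1%N else (i - (a + b)).+2.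
Proof.
case: ifP => lt_ia; first by apply: rowof_block; rewrite // psum_cons !psum0 addn0 lt_ia.
case: ifP => lt_iab.
  by apply: rowof_block; rewrite // !psum_cons !psum0 !addn0 lt_iab leqNgt lt_ia.
have lt_i := ltn_ord i; apply: rowof_block; first by rewrite /= size_nseq !ltnS; lia.
by rewrite !psum_lam; lia.
Qed.

Lemma colof_lam (i : 'I_d) :
  colof lam i = if (i < a)%N then i : nat else if (i < a + b)%N then (i - a)%N else 0%N.
Proof.
rewrite /colof rowof_lam -!/(psum lam _).
case: ifP => lt_ia; first by rewrite psum0 subn0.
case: ifP => lt_iab; first by rewrite psum_cons psum0 addn0.
by have lt_i := ltn_ord i; rewrite psum_lam; lia.
Qed.

Lemma rowof_gam (i : 'I_d) : rowof gam i = if (i < a + b)%N then i : nat else (a + b)%N.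
Proof.
have lt_i := ltn_ord i; case: ifP => lt_iab; apply: rowof_block.
- by rewrite size_cat size_nseq addn1 ltnS ltnW.
- by rewrite !psum_ones ?leqnn // ltnW.
- by rewrite size_cat size_nseq addn1.
- by rewrite psum_ones // psum_ones_last /= leqNgt lt_iab; lia.
Qed.

Lemma young_lam_fix r (i : 'I_d) : r \in R -> (a + b <= i)%N -> r i = i.
Proof.
move=> /stab_labP/(_ i); rewrite !rowof_lam => r_i le_abi; apply/val_inj => /=.
move: r_i le_abi; case: (ltnP (r i) a); case: (ltnP (r i) (a + b));
  case: (ltnP i a); case: (ltnP i (a + b)); lia.
Qed.

Lemma young_gam_fix h (i : 'I_d) : h \in H -> (i < a + b)%N -> h i = i.
Proof.
move=> /stab_labP/(_ i); rewrite !rowof_gam => h_i lt_iab; apply/val_inj => /=.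
by move: h_i lt_iab; case: (ltnP (h i) (a + b)); case: (ltnP i (a + b)); lia.
Qed.

Lemma young_gam_tail h (i : 'I_d) : h \in H -> (a + b <= i)%N -> (a + b <= h i)%N.
Proof.
move=> Hh le_abi; rewrite leqNgt; apply/negP => lt_hi.
by move: (young_gam_fix Hh lt_hi) => /perm_inj hi_i; rewrite hi_i ltnNge le_abi in lt_hi.
Qed.

Lemma young_lam_head r (i : 'I_d) : r \in R -> (i < a + b)%N -> (r i < a + b)%N.
Proof.
move=> Rr lt_iab; rewrite ltnNge; apply/negP => le_ri.
by move: (young_lam_fix Rr le_ri) => /perm_inj ri_i; rewrite ri_i leqNgt lt_iab in le_ri.
Qed.

Lemma young_lam_gam_commute r h : r \in R -> h \in H -> commute r h.
Proof.
move=> Rr Hh; apply/permP => i; rewrite !permM.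
have [lt_iab|le_abi] := ltnP i (a + b).
  by rewrite (young_gam_fix Hh lt_iab) (young_gam_fix Hh (young_lam_head Rr lt_iab)).
by rewrite (young_lam_fix Rr le_abi) (young_lam_fix Rr (young_gam_tail Hh le_abi)).
Qed.

Lemma young_gam_sub_col_stab : H \subset C.
Proof.
apply/subsetP => h Hh; apply/stab_labP => i.
have [lt_iab|le_abi] := ltnP i (a + b); first by rewrite (young_gam_fix Hh lt_iab).
rewrite !colof_lam; move: le_abi (young_gam_tail Hh le_abi).
by case: (ltnP (h i) a); case: (ltnP (h i) (a + b)); case: (ltnP i a); case: (ltnP i (a + b)); lia.
Qed.

Lemma young_lam_col_stab_TI : (R :&: C \subset [1])%g.
Proof.
apply/subsetP => r /setIP[/stab_labP Rr /stab_labP Cr]; rewrite inE.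
apply/eqP/permP => i; rewrite perm1; apply/val_inj => /=.
move: (Rr i) (Cr i); rewrite !rowof_lam !colof_lam.
case: (ltnP (r i) a); case: (ltnP (r i) (a + b)); case: (ltnP i a); case: (ltnP i (a + b)); lia.
Qed.

Lemma card_young_gam : #|H| = c`!.
Proof.
pose B := [set i : 'I_d | (a + b <= i)%N].
have -> : #|H| = #|perm_on B|.
  apply: eq_card => s; apply/idP/idP => [Hs|/out_perm s_out].
    apply/subsetP => i; rewrite !inE; apply: contraR; rewrite -ltnNge => lt_iab.
    by rewrite (young_gam_fix Hs lt_iab).
  apply/stab_labP => i; rewrite !rowof_gam; have [lt_iab|le_abi] := ltnP i (a + b).
    by rewrite s_out ?lt_iab // inE -ltnNge.
  rewrite ltnNge; case: leqP => // lt_si.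
  have /s_out/perm_inj ssi_si : s i \notin B by rewrite inE -ltnNge.
  by rewrite ssi_si ltnNge le_abi in lt_si.
rewrite card_perm; congr (_ `!).
rewrite -[RHS]card_ord -(card_imset _ (@rshift_inj (a + b) c)).
apply: eq_card => i; rewrite inE; apply/idP/imsetP => [le_abi|[j _ ->]]; last exact: leq_addr.
have lt_j : (i - (a + b) < c)%N by have := ltn_ord i; lia.
by exists (Ordinal lt_j) => //; apply/val_inj => /=; lia.
Qed.

End YoungSubgroupsABC.

Lemma pchar_fact_neq0 (F : fieldType) p c :
  p \in [pchar F] -> (c < p)%N -> (c`!)%:R != 0 :> F.
Proof.
move=> pch; elim: c => [|c IHc] lt_cp; first by rewrite oner_eq0.
rewrite factS natrM mulf_neq0 ?IHc ?(ltnW lt_cp) // -(dvdn_pcharf pch).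
by apply: contraL lt_cp => /dvdn_leq; rewrite -leqNgt; apply.
Qed.

Section SignedIdempotent.
Variables (F : fieldType) (a b c : nat).
Local Notation d := (a + b + c)%N.
Local Notation lam := [:: a, b & nseq c 1%N].
Local Notation gam := (nseq (a + b) 1%N ++ [:: c]).
Local Notation R := (young_sub d lam).
Local Notation H := (young_sub d gam).
Local Notation aG := (aG F d).

Lemma signed_perm_module_abc :
  signed_perm_module F d [:: a; b] [:: c] = cyclic_mx aG (gmul (symz F R) (asymz F H)).
Proof. by rewrite /signed_perm_module /= !addn0. Qed.

Lemma signed_perm_module_sub :
  (signed_perm_module F d [:: a; b] [:: c] <= perm_module F d lam)%MS.
Proof. by rewrite signed_perm_module_abc cyclic_mx_sub ?cyclic_mx_module ?gmul_cyclic. Qed.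

Lemma perm_module_lmul_sub (k : F) :
  (perm_module F d lam *m lmul_mx (k *: asymz F H)
     <= signed_perm_module F d [:: a; b] [:: c])%MS.
Proof.
rewrite signed_perm_module_abc (hom_cyclic_mx (centgmx_hom _ (lmul_mx_cent _))).
rewrite cyclic_mx_sub ?cyclic_mx_module // lmul_mxE gmulZl.
by rewrite -symz_asymzC ?scalemx_sub ?cyclic_mx_id //; apply: young_lam_gam_commute.
Qed.

Lemma specht_abc_neq0 : specht_module F d lam != 0.
Proof. by rewrite cyclic_mx_eq0 symz_asymz_neq0 // young_lam_col_stab_TI. Qed.

Lemma specht_lmul_fixed : #|H|%:R != 0 :> F ->
  specht_module F d lam *m lmul_mx (#|H|%:R^-1 *: asymz F H) = specht_module F d lam.
Proof.
move=> nzH; apply: cent_fix_cyclic_mx (lmul_mx_cent _) _.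
rewrite lmul_mxE gmulZl -gmulA -symz_asymzC; last exact: young_lam_gam_commute.
by rewrite gmulA asymz_mul_sub ?young_gam_sub_col_stab // gmulZr scalerA mulVf ?scale1r.
Qed.

End SignedIdempotent.

Unset Implicit Arguments.

Theorem proposition3p5p1 (F : fieldType) (p : nat) (a b c : nat)
  (Y : 'M[F]_(nG ((a + b + c)%N))) :
  prime p -> p \in [pchar F] ->
  (1 <= c < p)%N -> (1 <= b <= a)%N ->
  @is_young_module F (a + b + c)%N [:: a, b & nseq c 1%N] Y ->
  exists Z : 'M[F]_(nG ((a + b + c)%N)),
    [/\ mxmodule (aG F ((a + b + c)%N)) Z,
        inhabited (mxsplits (aG F ((a + b + c)%N))
                     (signed_perm_module F ((a + b + c)%N) [:: a; b] [:: c]) Z) &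
        mx_iso (aG F ((a + b + c)%N)) Y Z].
Proof.
move=> _ pchF /andP[_ lt_cp] _ [[modY _ indecY] [[W modW defM dxYW]] sSY].
pose H := young_sub (a + b + c) (nseq (a + b) 1%N ++ [:: c]).
have nzH : #|H|%:R != 0 :> F by rewrite card_young_gam (pchar_fact_neq0 pchF).
have cE := lmul_mx_cent (#|H|%:R^-1 *: asymz F H).
apply: (summand_transfer modY modW defM dxYW cE indecY).
- exact: cyclic_mx_module.
- exact: perm_module_lmul_sub.
- exact: signed_perm_module_sub.
- exact: sSY.
- exact: specht_abc_neq0.
- exact: specht_lmul_fixed.
Qed.
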